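(* For any constant $\beta\ge 0$, there exists an indivisible-goods instance in which no allocation selected by the maximum Nash welfare (MNW) rule satisfies EJR-$\beta$.
   Context: Model: There is a set of agents $N=\{1,\dots,n\}$. The resource $R$ consists of a cake $C=[0,c]$ for a real $c\ge 0$ and a set of indivisible goods $G=\{g_1,\dots,g_m\}$ for an integer $m\ge 0$, with $\max(c,m)>0$. A bundle $R'=(C',G')$ consists of a piece of cake $C'\subseteq C$ (finite union of disjoint closed intervals, with total length $\ell(C')$) and a set $G'\subseteq G$; its size is $s(R')=\ell(C')+|G'|$. Each agent $i$ approves a bundle $R_i=(C_i,G_i)$, and her utility for a bundle $R'$ is $u_i(R')=\ell(C_i\cap C')+|G_i\cap G'|$. A parameter $\alpha\in(0,c+m]$ is given; an allocation is a bundle $A$ with $s(A)\le\alpha$. An indivisible-goods instance is one with $c=0$. For a real $t>0$, a group $N^*\subseteq N$ is $t$-cohesive if $|N^*|\ge t\cdot n/\alpha$ and $s(\bigcap_{i\in N^*}R_i)\ge t$. EJR-$\beta$ (for $\beta\ge 0$): an allocation $A$ satisfies EJR-$\beta$ if for every real $t>0$ and every $t$-cohesive group $N^*$, there is $j\in N^*$ with $u_j(A)>t-\beta$. MNW rule: selects an allocation $A$ maximizing $\prod_{i\in N}u_i(A)$; if the maximum product is $0$, it first maximizes the number of agents with positive utility and then maximizes the product of utilities of that set of agents. *)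

(* Indivisible-goods instances of the cake+goods model:
   c = 0, so every cake piece has length 0 and bundles reduce to goods sets. *)
From mathcomp Require Import all_boot all_order all_algebra.
From mathcomp Require Import reals.
Set Implicit Arguments. Unset Strict Implicit. Unset Printing Implicit Defensive.
Import Order.TTheory GRing.Theory Num.Theory.
Local Open Scope ring_scope.

Section IndivGoods.
Variables (R : realType) (n m : nat) (alpha : R) (G : 'I_n -> {set 'I_m}).

Definition util (i : 'I_n) (A : {set 'I_m}) : nat := #|G i :&: A|.

Definition feasible (A : {set 'I_m}) : Prop := (#|A|%:R : R) <= alpha.

Definition cohesive (t : R) (S : {set 'I_n}) : Prop :=
  (t * n%:R / alpha <= #|S|%:R) /\ (t <= #|\bigcap_(i in S) G i|%:R).

Definition EJR (beta : R) (A : {set 'I_m}) : Prop :=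
  forall (t : R) (S : {set 'I_n}), 0 < t -> cohesive t S ->
    exists2 j, j \in S & t - beta < (util j A)%:R.

Definition nash (A : {set 'I_m}) : nat := (\prod_(i : 'I_n) util i A)%N.
Definition posagents (A : {set 'I_m}) : {set 'I_n} := [set i | (0 < util i A)%N].
Definition nash_pos (A : {set 'I_m}) : nat := (\prod_(i in posagents A) util i A)%N.

Definition MNW (A : {set 'I_m}) : Prop :=
  feasible A /\
  ((exists2 B, feasible B & (0 < nash B)%N) ->
     forall B, feasible B -> (nash B <= nash A)%N) /\
  (~ (exists2 B, feasible B & (0 < nash B)%N) ->
     forall B, feasible B ->
         (#|posagents B| < #|posagents A|)%N \/
         (#|posagents B| = #|posagents A| /\ (nash_pos B <= nash_pos A)%N)).
End IndivGoods.

(* Take T > beta + 1, T private agents each approving one private good, and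
   T^2 agents approving the same T common goods, with budget alpha = T + 1.
   A positive Nash welfare is attainable, so an MNW allocation gives every
   agent positive utility: it contains all T private goods and hence at most
   one common good.  The T^2 common agents form a T-cohesive group, and each of
   them gets utility at most 1 <= T - beta, so EJR-beta fails. *)
From mathcomp Require Import all_boot all_order all_algebra reals.
From mathcomp Require Import ring lra.
Set Implicit Arguments. Unset Strict Implicit. Unset Printing Implicit Defensive.
Import Order.TTheory GRing.Theory Num.Theory.
Local Open Scope ring_scope.

Lemma card_ord_ltn (N a : nat) : (a <= N)%N -> #|[set j : 'I_N | (j < a)%N]| = a.
Proof.
move=> le_aN.
have -> : [set j : 'I_N | (j < a)%N] = widen_ord le_aN @: setT.
  apply/setP => j; rewrite inE; apply/idP/imsetP => [lt_ja | [k _ ->]] /=.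
    by exists (Ordinal lt_ja) => //; apply: val_inj.
  exact: ltn_ord.
rewrite card_imset ?cardsT ?card_ord //.
by move=> x y /(congr1 val) /= /val_inj.
Qed.

Section Rules.
Variables (R : realType) (n m : nat) (alpha : R) (G : 'I_n -> {set 'I_m}).

Lemma MNW_util_gt0 A B :
  feasible alpha B -> (0 < nash G B)%N -> MNW alpha G A ->
  forall i, (0 < util G i A)%N.
Proof.
move=> fB nash_B_gt0 [_ [maxA _]] i.
have nash_A_gt0 : (0 < nash G A)%N.
  exact: leq_trans nash_B_gt0 (maxA (ex_intro2 _ _ B fB nash_B_gt0) B fB).
by move: nash_A_gt0; rewrite /nash (bigD1 i) //= muln_gt0 => /andP[].
Qed.

Lemma cohesive_not_EJR beta t S A :
  0 < t -> cohesive alpha G t S ->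
  (forall j, j \in S -> (util G j A)%:R <= t - beta) -> ~ EJR alpha G beta A.
Proof.
move=> t_gt0 cohS utilS ejrA.
have [j jS] := ejrA t S t_gt0 cohS.
by rewrite ltNge utilS.
Qed.

End Rules.

Section Instance.
Variable T : nat.
Hypothesis T_gt0 : (0 < T)%N.

Definition private_goods : {set 'I_(T + T)} := [set j : 'I_(T + T) | (j < T)%N].

Definition approval (i : 'I_(T + T * T)) : {set 'I_(T + T)} :=
  if (i < T)%N then [set j : 'I_(T + T) | val j == val i] else ~: private_goods.

Definition common_agents : {set 'I_(T + T * T)} :=
  [set i : 'I_(T + T * T) | (T <= i)%N].

Lemma card_private_goods : #|private_goods| = T.
Proof. exact/card_ord_ltn/leq_addr. Qed.

Lemma card_common_goods : #|~: private_goods| = T.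
Proof. by rewrite cardsCs setCK card_ord card_private_goods addnK. Qed.

Lemma card_common_agents : #|common_agents| = (T * T)%N.
Proof.
have -> : common_agents = ~: [set i : 'I_(T + T * T) | (i < T)%N].
  by apply/setP => i; rewrite !inE -leqNgt.
by rewrite cardsCs setCK card_ord card_ord_ltn ?leq_addr // addKn.
Qed.

Lemma approval_common i : i \in common_agents -> approval i = ~: private_goods.
Proof. by rewrite inE /approval => le_Ti; rewrite ltnNge le_Ti. Qed.

Lemma common_agents_cohesive (R : realType) :
  cohesive (T.+1)%:R approval (T%:R : R) common_agents.
Proof.
split.
  rewrite card_common_agents !natrM natrD natrM -addn1 natrD.
  have T1_neq0 : (T%:R + 1 : R) != 0 by rewrite gt_eqF // ltr_wpDl.
  by rewrite (_ : _ / _ = T%:R * T%:R) //; field.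
rewrite ler_nat -{1}card_common_goods; apply: subset_leq_card.
by apply/bigcapsP => i /approval_common ->.
Qed.

Lemma MNW_private_goods (R : realType) A :
  MNW ((T.+1)%:R : R) approval A -> private_goods \subset A.
Proof.
pose B := [set j : 'I_(T + T) | (j < T.+1)%N].
have fB : feasible ((T.+1)%:R : R) B.
  by rewrite /feasible card_ord_ltn // -addn1 leq_add2l.
have nash_B_gt0 : (0 < nash approval B)%N.
  apply: prodn_gt0 => i; apply/card_gt0P; rewrite /approval.
  case: ifP => lt_iT.
    exists (widen_ord (leq_addr T T) (Ordinal lt_iT)).
    by rewrite !inE /= eqxx ltnS ltnW.
  have lt_T_TT : (T < T + T)%N by rewrite -{1}[T]addn0 ltn_add2l.
  exists (Ordinal lt_T_TT).
  by rewrite !inE /= ltnn ltnSn.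
move=> /(MNW_util_gt0 fB nash_B_gt0) util_gt0.
apply/subsetP => j; rewrite inE => lt_jT.
have lt_jn : (j < T + T * T)%N by rewrite ltn_addr.
have := util_gt0 (Ordinal lt_jn); rewrite /util /approval /= lt_jT.
by case/card_gt0P => k; rewrite !inE => /andP[/eqP/val_inj ->].
Qed.

Lemma MNW_common_goods (R : realType) A :
  MNW ((T.+1)%:R : R) approval A -> (#|~: private_goods :&: A| <= 1)%N.
Proof.
move=> mnwA; have [feasA _] := mnwA.
have /setIidPr sub_PA := MNW_private_goods mnwA.
rewrite setIC -setDE cardsD sub_PA card_private_goods leq_subLR addn1.
by rewrite -(ler_nat R).
Qed.

End Instance.

Theorem mainTheorem4 (R : realType) (beta : R) :
  0 <= beta ->
  exists (n m : nat) (alpha : R) (G : 'I_n -> {set 'I_m}),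
    [/\ (0 < n)%N, (0 < m)%N, 0 < alpha, alpha <= m%:R &
      forall A : {set 'I_m}, MNW alpha G A -> ~ EJR alpha G beta A].
Proof.
move=> beta_ge0.
pose T := (Num.Def.archi_bound beta).+1.
have beta_lt : beta + 1 < T%:R by rewrite /T -addn1 natrD ltrD2r archi_boundP.
exists (T + T * T)%N, (T + T)%N, (T.+1)%:R, (@approval T).
split => //; first by rewrite ler_nat -addn1 leq_add2l.
move=> A mnwA; apply: (cohesive_not_EJR _ (common_agents_cohesive T R)).
  by rewrite ltr0n.
move=> j /approval_common; rewrite /util => ->.
have : ((#|~: private_goods T :&: A|)%:R : R) <= 1.
  by rewrite lern1 (MNW_common_goods (ltn0Sn _) mnwA).
lra.
Qed.
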